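(* Let $\mathbf{L}=\langle L,\leq,0,1\rangle$ be a totally ordered complete lattice and let $\mathcal{D}_1,\mathcal{D}_2$ be ranked data tables on the same relation scheme $R$. Then $\mathcal{D}_1\equiv\mathcal{D}_2$ if and only if there is an order isomorphism $f\colon L(\mathcal{D}_1)\to L(\mathcal{D}_2)$ such that $\mathcal{D}_1\circ f=\mathcal{D}_2$.
   Context: A relation scheme $R$ is a finite set of attributes, each with a (at most countable) set of admissible values; a tuple on $R$ assigns to each attribute of $R$ an admissible value; $\mathrm{Tupl}(R)$ is the set of all tuples on $R$. A ranked data table (RDT) on $R$ is a map $\mathcal{D}\colon\mathrm{Tupl}(R)\to L$ with $\{r;\ \mathcal{D}(r)>0\}$ finite. Its range is $L(\mathcal{D})=\{\mathcal{D}(r);\ r\in\mathrm{Tupl}(R)\}\subseteq L$. For an RDT $\mathcal{D}$ and $r\in\mathrm{Tupl}(R)$, $\mathcal{U}(\mathcal{D},r)=\{r'\in\mathrm{Tupl}(R);\ \mathcal{D}(r')\geq\mathcal{D}(r)\}$; $\mathcal{D}_1\sqsubseteq\mathcal{D}_2$ means $\mathcal{U}(\mathcal{D}_1,r)\subseteq\mathcal{U}(\mathcal{D}_2,r)$ for all $r$; $\mathcal{D}_1\equiv\mathcal{D}_2$ (ordinal equivalence) means $\mathcal{D}_1\sqsubseteq\mathcal{D}_2$ and $\mathcal{D}_2\sqsubseteq\mathcal{D}_1$. For $L_1,L_2\subseteq L$, a map $f\colon L_1\to L_2$ is an order isomorphism if it is surjective and satisfies $a\leq b \iff f(a)\leq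 f(b)$ for all $a,b\in L_1$. $\mathcal{D}\circ f$ denotes the map $r\mapsto f(\mathcal{D}(r))$. *)

From Stdlib Require Import List.
From mathcomp Require Import all_boot all_order.
Set Implicit Arguments. Unset Strict Implicit. Unset Printing Implicit Defensive.
Import Order.TTheory.
Local Open Scope order_scope.

(* A relation scheme: a finite type of attributes [Att], each attribute [a]
   having an (at most countable) domain [dom a : countType]. *)
Definition Tupl (Att : finType) (dom : Att -> countType) : Type :=
  forall a : Att, dom a.

Definition complete_lattice {d} (L : porderType d) : Prop :=
  forall A : L -> Prop, exists s : L,
    (forall a, A a -> a <= s) /\ (forall u, (forall a, A a -> a <= u) -> s <= u).

Definition is_RDT {d} {L : tbOrderType d} (T : Type) (D : T -> L) : Prop :=
  exists s : list T, forall r, \bot < D r -> List.In r s.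

Definition range_of {d} {L : tbOrderType d} (T : Type) (D : T -> L) (x : L) : Prop :=
  exists r, D r = x.

Definition Uset {d} {L : tbOrderType d} (T : Type) (D : T -> L) (r : T) : T -> Prop :=
  fun r' => D r <= D r'.

Definition rdt_le {d} {L : tbOrderType d} (T : Type) (D1 D2 : T -> L) : Prop :=
  forall r r', Uset D1 r r' -> Uset D2 r r'.

Definition ord_equiv {d} {L : tbOrderType d} (T : Type) (D1 D2 : T -> L) : Prop :=
  rdt_le D1 D2 /\ rdt_le D2 D1.

(* f : L1 -> L2 (L1, L2 subsets of L, given as predicates) is an order
   isomorphism: maps L1 into L2, is surjective onto L2, and a <= b <-> f a <= f b
   on L1.  f is represented by a function on L whose values outside L1 are
   irrelevant. *)
Definition order_iso {d} {L : tbOrderType d} (L1 L2 : L -> Prop) (f : L -> L) : Prop :=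
  (forall a, L1 a -> L2 (f a)) /\
  (forall b, L2 b -> exists2 a, L1 a & f a = b) /\
  (forall a b, L1 a -> L1 b -> (a <= b <-> f a <= f b)).

From mathcomp Require Import all_boot all_order.
From Stdlib Require Import ClassicalEpsilon.
Import Order.TTheory.
Local Open Scope order_scope.

(* Ordinal equivalence says exactly that D1 and D2 induce the same preorder on
   tuples.  Hence D2 r depends only on D1 r, so D2 factors through D1 by a map
   that is an order isomorphism between the two ranges; conversely such a
   factorization transports the preorder. *)

Section OrdinalEquivalence.

Variables (disp : Order.disp_t) (L : tbOrderType disp) (T : Type).
Variables D1 D2 : T -> L.

Lemma ord_equivP :
  ord_equiv D1 D2 <-> forall r r', (D1 r <= D1 r') = (D2 r <= D2 r').
Proof.
split=> [[E12 E21] r r' | E]; last by split=> r r'; rewrite /Uset E.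
by apply/idP/idP; [apply: E12 | apply: E21].
Qed.

Lemma ord_equiv_eq r r' :
  ord_equiv D1 D2 -> D1 r = D1 r' -> D2 r = D2 r'.
Proof.
by move=> /ord_equivP E eq1; apply/eqP; rewrite eq_le -!E eq1 lexx.
Qed.

(* Outside the range of D1 the value is irrelevant; we take the identity. *)
Definition transfer (x : L) : L :=
  match excluded_middle_informative (range_of D1 x) with
  | left hx => D2 (proj1_sig (constructive_indefinite_description _ hx))
  | right _ => x
  end.

Lemma transferE r : ord_equiv D1 D2 -> transfer (D1 r) = D2 r.
Proof.
move=> E; rewrite /transfer; case: excluded_middle_informative => [h | []];
  last by exists r.
by case: constructive_indefinite_description => r' /= /(ord_equiv_eq _ _ E).
Qed.

Lemma order_iso_of_factor (f : L -> L) :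
  ord_equiv D1 D2 -> (forall r, f (D1 r) = D2 r) ->
  order_iso (range_of D1) (range_of D2) f.
Proof.
move=> /ord_equivP E fD; split; [|split].
- by move=> _ [r <-]; exists r; rewrite fD.
- by move=> _ [r <-]; exists (D1 r); [exists r | rewrite fD].
- by move=> _ _ [r <-] [r' <-]; rewrite !fD E.
Qed.

Lemma ord_equiv_of_order_iso (f : L -> L) :
  order_iso (range_of D1) (range_of D2) f -> (forall r, f (D1 r) = D2 r) ->
  ord_equiv D1 D2.
Proof.
move=> [_ [_ iso]] fD; apply/ord_equivP => r r'.
have /iso : range_of D1 (D1 r) by exists r.
move=> /(_ (D1 r') (ex_intro _ r' erefl)); rewrite !fD.
by move=> le_iff; apply/idP/idP => /le_iff.
Qed.

End OrdinalEquivalence.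

Arguments transfer {disp L T}.

Theorem theorem5 (d : Order.disp_t) (L : tbOrderType d)
  (HL : complete_lattice L)
  (Att : finType) (dom : Att -> countType)
  (D1 D2 : Tupl dom -> L) (H1 : is_RDT D1) (H2 : is_RDT D2) :
  ord_equiv D1 D2 <->
  exists f : L -> L, order_iso (range_of D1) (range_of D2) f /\
                     (forall r, f (D1 r) = D2 r).
Proof.
split=> [E | [f [iso fD]]]; last exact: ord_equiv_of_order_iso iso fD.
have fD r : transfer D1 D2 (D1 r) = D2 r by exact: transferE.
by exists (transfer D1 D2); split; [apply: order_iso_of_factor | ].
Qed.
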